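(* Let $A$ be a finite set, $\bot,\dagger\notin A$ distinct extra symbols, $N\geq1$, and let $\mathsf L$, $p_x=p(-|x)$, $\pi$, $T(\bot)$ and the generalized metric space $\mathcal M$ be as in the context. Then for every $t>0$, $$\operatorname{Mag}(t\mathcal M)=(t-1)\sum_{x\in\mathsf L\setminus T(\bot)}H_t(p_x)+\#T(\bot),$$ where $H_t(p)=\frac{1}{t-1}\bigl(1-\sum_i p_i^t\bigr)$ is the Tsallis $t$-entropy (for $t=1$, $H_1$ is the Shannon entropy, so the first term vanishes).
   Context: $A^*$ is the set of finite strings over $A$, $|x|$ denotes length (with $\bot,\dagger$ counted). $\mathsf L=\{\bot a : a\in A^*,\ |a|\leq N-1\}\sqcup\{\bot a\dagger : a\in A^*,\ |a|<N-1\}$, partially ordered by the prefix relation ($x\leq y$ iff $y=xa'$ for some string $a'$). Strings $\bot a$ are unfinished texts, $\bot a\dagger$ finished texts. For each unfinished text $x\in\mathsf L$ with $|x|\leq N-1$ a probability mass function $p_x=p(-|x)$ on $A\cup\{\dagger\}$ is given. Define $\pi(y|x)=1$ if $x=y$; $0$ if $x\not\leq y$; and if $x=\bot a_1\cdots a_t$ is a proper prefix of $y=xa_{t+1}\cdots a_{t+k}$, $\pi(y|x)=\prod_{i=1}^k p(a_{t+i}\mid\bot a_1\cdots a_{t+i-1})$. $T(\bot)$ is the set of elements of $\mathsf L$ that are either unfinished texts of length $N$ or finished texts (so $\mathsf L\setminus T(\bot)$ is the set of unfinished texts of length $\leq N-1$). $\mathcal M$ is the generalized metric space with point set $\mathsf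 L$ and $d(x,y)=-\ln\pi(y|x)\in[0,\infty]$. For $t>0$, $t\mathcal M$ has distances $t\,d$, and its magnitude is $\operatorname{Mag}(t\mathcal M)=\sum_{x,y\in\mathsf L}\zeta_t^{-1}(x,y)$, where $\zeta_t$ is the (invertible) matrix $\zeta_t(x,y)=e^{-t d(x,y)}=\pi(y|x)^t$ with $e^{-\infty}=0$. *)

From HB Require Import structures.
From mathcomp Require Import all_boot all_order all_algebra.
From mathcomp Require Import all_classical all_reals all_analysis.
Set Implicit Arguments. Unset Strict Implicit. Unset Printing Implicit Defensive.
Import Order.TTheory GRing.Theory Num.Theory.
Local Open Scope ring_scope.

(* A word a in A^* with |a| <= N-1, stored as (k, k-tuple) with k < N. *)
Definition word (A : finType) (N : nat) := {k : 'I_N & k.-tuple A}.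

(* Candidate texts: a word a together with a flag saying whether the text is
   finished (i.e. ends with the symbol dagger).  The bottom symbol is implicit
   (every text starts with it).  Text (a,false) is  ⊥a, text (a,true) is ⊥a†. *)
Definition Lpred (A : finType) (N : nat) : pred (word A N * bool) :=
  fun x => x.2 ==> (tag x.1 < N.-1)%N.

Definition L (A : finType) (N : nat) := {x : word A N * bool | Lpred x}.

Section Texts.
Variables (A : finType) (N : nat).

Definition letters (x : L A N) : seq A := val (tagged (val x).1).
Definition finished (x : L A N) : bool := (val x).2.
(* the symbol string of x after ⊥ ; None stands for the dagger symbol *)
Definition syms (x : L A N) : seq (option A) :=
  map Some (letters x) ++ (if finished x then [:: None] else [::]).
(* |x| : length, counting ⊥ and † *)
Definition tlen (x : L A N) : nat := (size (syms x)).+1.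
Definition text_le (x y : L A N) : bool := prefix (syms x) (syms y).
Definition inT (x : L A N) : bool := finished x || (tlen x == N).
End Texts.

Section Model.
Variables (R : realType) (A : finType) (N : nat).
(* p a s = p(s | ⊥a), s ∈ A ∪ {†} (None = †) *)
Variable p : seq A -> option A -> R.

Definition pi_cond (y x : L A N) : R :=
  if x == y then 1
  else if text_le x y then
    \prod_(size (syms x) <= i < size (syms y))
       p (take i (letters y)) (nth None (syms y) i)
  else 0.

(* ζ_t(x,y) = e^{-t d(x,y)} = π(y|x)^t  (with 0^t = 0 for t > 0) *)
Definition zeta (t : R) (x y : L A N) : R := (pi_cond y x) `^ t.

Definition zeta_mx (t : R) : 'M[R]_#|{: L A N}| :=
  \matrix_(i, j) zeta t (enum_val i) (enum_val j).

Definition magnitude (t : R) : R := \sum_i \sum_j (invmx (zeta_mx t)) i j.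
End Model.

Definition tsallis (R : realType) (I : finType) (t : R) (q : I -> R) : R :=
  if t == 1 then - \sum_i q i * ln (q i)
  else (t - 1)^-1 * (1 - \sum_i q i `^ t).

Definition is_pmf_family (R : realType) (A : finType) (N : nat)
  (p : seq A -> option A -> R) : Prop :=
  forall a : seq A, (size a + 1 <= N.-1)%N ->
    (forall s, 0 <= p a s) /\ \sum_s p a s = 1.

Arguments magnitude {R A} N p t.
Arguments is_pmf_family {R A} N p.

From HB Require Import structures.
From mathcomp Require Import all_boot all_order all_algebra.
From mathcomp Require Import all_classical all_reals all_analysis.
From mathcomp Require Import zify.
Import Order.TTheory GRing.Theory Num.Theory.
Local Open Scope ring_scope.
Set Implicit Arguments. Unset Strict Implicit.

(* The zeta matrix is unitriangular for the prefix order, hence invertible,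
   and the sum of the entries of its inverse is the total mass of any
   weighting w, i.e. any solution of zeta_t w = 1.  Such a weighting is
   w(x) = 1 on the maximal texts T(bot) and w(x) = 1 - sum_s p_x(s)^t,
   which is (t - 1) H_t(p_x), elsewhere: as pi(y|x) = p_x(s) pi(y|xs)
   whenever xs <= y, the row of x satisfies
     sum_y zeta_t(x,y) w(y) = w(x) + sum_s p_x(s)^t sum_y zeta_t(xs,y) w(y),
   and the inner sums are 1 by induction on N - |x|. *)

Section Weighting.
Variables (F : fieldType) (n : nat).

Lemma unitmx_unitriangular (Z : 'M[F]_n) (rank : 'I_n -> nat) :
  (forall i, Z i i = 1) ->
  (forall i j, i != j -> Z i j != 0 -> (rank i < rank j)%N) ->
  Z \in unitmx.
Proof.
move=> Z1 Ztri; rewrite -row_free_unit; apply: inj_row_free => v vZ0.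
apply/rowP => k; rewrite mxE; have [m] := ubnP (rank k).
elim: m k => // m IH k /ltnSE rk_k.
move/rowP/(_ k): (vZ0); rewrite !mxE (bigD1 k) //= Z1 mulr1.
rewrite big1 ?addr0 // => l lk.
have [->|/(Ztri _ _ lk) rk_l] := eqVneq (Z l k) 0; first by rewrite mulr0.
by rewrite IH ?mul0r // (leq_trans rk_l).
Qed.

Lemma sum_invmx_weighting (Z : 'M[F]_n) (w : 'cV[F]_n) :
  Z \in unitmx -> Z *m w = const_mx 1 ->
  \sum_i \sum_j invmx Z i j = \sum_i w i 0.
Proof.
move=> Zu Zw; apply: eq_bigr => i _.
by rewrite -(mulKmx Zu w) Zw mxE; apply: eq_bigr => j _; rewrite mxE mulr1.
Qed.

End Weighting.

Lemma tsallis_pmf (R : realType) (I : finType) (t : R) (q : I -> R) :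
  (forall i, 0 <= q i) -> \sum_i q i = 1 ->
  (t - 1) * tsallis t q = 1 - \sum_i q i `^ t.
Proof.
move=> q_ge0 q_sum1; rewrite /tsallis; have [->|t_neq1] := eqVneq t 1.
  rewrite subrr mul0r; apply/esym/eqP; rewrite subr_eq0 -{1}q_sum1.
  by apply/eqP/eq_bigr => i _; rewrite powRr1.
by rewrite mulrA mulfV ?mul1r // subr_eq0.
Qed.

Lemma prefix_rconsE (T : eqType) (x0 : T) (u v : seq T) (s : T) :
  prefix (rcons u s) v =
  [&& prefix u v, (size u < size v)%N & nth x0 v (size u) == s].
Proof.
rewrite !prefixE size_rcons; case: ltnP => [uv|vu]; last first.
  by rewrite andbF take_oversize ?(leq_trans vu) //; apply/eqP => vE;
    move: vu; rewrite vE size_rcons ltnn.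
by rewrite (take_nth x0 uv) eqseq_rcons.
Qed.

Section Texts.
Variables (A : finType) (N : nat).
Implicit Types x y : L A N.

Lemma size_syms x : size (syms x) = (size (letters x) + finished x)%N.
Proof. by rewrite /syms size_cat size_map; case: (finished x). Qed.

Lemma size_letters_lt x : (size (letters x) < N)%N.
Proof. by rewrite /letters size_tuple. Qed.

Lemma size_syms_le x : (size (syms x) <= N.-1)%N.
Proof.
case: x => [[[k a] b] /= xP].
rewrite size_syms /letters /finished /= size_tuple.
by move: xP; rewrite /Lpred /=; have := ltn_ord k; case: b => /=; lia.
Qed.

Lemma pmap_syms x : pmap id (syms x) = letters x.
Proof.
rewrite /syms pmap_cat (map_pK (f := id) (g := @Some A) (fun _ => erefl)).
by case: (finished x); rewrite cats0.
Qed.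

Lemma finished_syms x : finished x = (None \in syms x).
Proof.
rewrite /syms mem_cat; have /negbTE -> : None \notin map Some (letters x).
  by apply/mapP => -[].
by case: (finished x); rewrite ?inE.
Qed.

Lemma syms_inj : injective (@syms A N).
Proof.
case=> [[[k a] b] xP] [[[k' a'] b'] yP] xy.
have := congr1 (pmap id) xy; rewrite !pmap_syms /letters /= => aa'.
have := finished_syms (exist _ (existT _ k a, b) xP).
rewrite xy -finished_syms /finished /= => bb'; subst b'.
have kk' : k = k'.
  by apply: val_inj; rewrite /= -(size_tuple a) -(size_tuple a') aa'.
by subst k'; apply: val_inj; congr (existT _ _ _, _); apply: val_inj.
Qed.

Lemma text_le_refl x : text_le x x.
Proof. exact: prefix_refl. Qed.

Lemma text_lt_size x y :
  text_le x y -> (size (syms x) < size (syms y))%N = (x != y).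
Proof.
rewrite /text_le prefixE => /eqP xy; apply/idP/idP => [lt_xy|ne_xy].
  by apply: contraTneq lt_xy => ->; rewrite ltnn.
rewrite ltnNge; apply: contra ne_xy => le_yx.
by apply/eqP/syms_inj; rewrite -xy take_oversize.
Qed.

Lemma inT_maximal x y : inT x -> text_le x y -> y = x.
Proof.
move=> xT le_xy; apply/eqP; rewrite eq_sym; apply/negPn.
rewrite -(text_lt_size le_xy) -leqNgt.
case/orP: xT => [x_fin | /eqP x_len]; last first.
  by have := size_syms_le y; rewrite /tlen in x_len; lia.
have syms_x : syms x = rcons (map Some (letters x)) None.
  by rewrite /syms x_fin cats1.
move: le_xy; rewrite /text_le syms_x (prefix_rconsE None) => /and3P [_ _].
rewrite size_rcons !size_map size_syms /syms nth_cat size_map.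
case: ltnP => [lt_ay /eqP nth_y | le_ya _]; last by case: (finished y); lia.
rewrite -[X in (_ < X)%N](size_map (@Some A)) in lt_ay.
have := mem_nth None lt_ay.
by rewrite nth_y => /mapP [].
Qed.

Lemma not_inT x : ~~ inT x -> ~~ finished x /\ (size (letters x) + 1 <= N.-1)%N.
Proof.
rewrite /inT /tlen size_syms negb_or => /andP [/negbTE x_fin x_len].
by rewrite x_fin; split=> //; move: x_len; have := size_letters_lt x; lia.
Qed.

Lemma syms_unfinished x : ~~ finished x -> syms x = map Some (letters x).
Proof. by rewrite /syms => /negbTE ->; rewrite cats0. Qed.

Lemma take_letters x y :
  text_le x y -> take (size (letters x)) (letters y) = letters x.
Proof.
case/prefixP=> r yE.
by rewrite -[letters y]pmap_syms yE pmap_cat pmap_syms take_size_cat.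
Qed.

Lemma exists_child x s : ~~ inT x -> exists y, syms y = rcons (syms x) s.
Proof.
case/not_inT => x_unfin x_len; rewrite syms_unfinished //.
have mk_text (a : seq A) (b : bool) (a_lt : (size a < N)%N) :
    b ==> (size a < N.-1)%N ->
    exists y : L A N, letters y = a /\ finished y = b.
  by move=> aP; exists (exist _ (existT _ (Ordinal a_lt) (in_tuple a), b) aP).
case: s => [c|].
- have [|y [ya yb]] := @mk_text (rcons (letters x) c) false _ isT.
    by rewrite size_rcons; lia.
  by exists y; rewrite /syms ya yb cats0 map_rcons.
- have [||y [ya yb]] := @mk_text (letters x) true; try by rewrite /=; lia.
  by exists y; rewrite /syms ya yb cats1.
Qed.

(* Texts in T(bot) have no children; for them [child] returns a junk value. *)
Definition child x s : L A N := odflt x [pick y | syms y == rcons (syms x) s].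

Lemma syms_child x s : ~~ inT x -> syms (child x s) = rcons (syms x) s.
Proof.
move=> xT; rewrite /child; case: pickP => [y /eqP //|noy].
by have [y yE] := exists_child s xT; move: (noy y); rewrite yE eqxx.
Qed.

Lemma child_leE x s y : ~~ inT x ->
  text_le (child x s) y =
  [&& text_le x y, x != y & nth None (syms y) (size (syms x)) == s].
Proof.
move=> xT; rewrite /text_le syms_child // (prefix_rconsE None).
by case le_xy: (prefix _ _); rewrite //= text_lt_size.
Qed.

End Texts.

Section Model.
Variables (R : realType) (A : finType) (N : nat) (p : seq A -> option A -> R).
Hypothesis p_pmf : is_pmf_family N p.
Variable t : R.
Hypothesis t_gt0 : 0 < t.
Implicit Types x y : L A N.

Definition next_prob y (i : nat) : R :=
  p (take i (letters y)) (nth None (syms y) i).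

Lemma pi_cond_le x y : text_le x y ->
  pi_cond p y x = \prod_(size (syms x) <= i < size (syms y)) next_prob y i.
Proof. by rewrite /pi_cond => ->; case: eqP => [<-|//]; rewrite big_geq. Qed.

Lemma p_ge0 a s : (size a + 1 <= N.-1)%N -> 0 <= p a s.
Proof. by move=> a_len; case: (p_pmf a_len). Qed.

Lemma pi_cond_ge0 x y : 0 <= pi_cond p y x.
Proof.
rewrite /pi_cond; case: ifP => // _; case: ifP => // _.
rewrite big_seq_cond; apply: prodr_ge0 => i /andP [+ _].
rewrite mem_index_iota => /andP [_ lt_iy]; apply: p_ge0.
by have := size_syms_le y; rewrite size_take; case: ifP; lia.
Qed.

Lemma zeta_refl x : zeta p t x x = 1.
Proof. by rewrite /zeta /pi_cond eqxx powR1. Qed.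

Lemma zeta_eq0 x y : ~~ text_le x y -> zeta p t x y = 0.
Proof.
move=> nle_xy; rewrite /zeta /pi_cond (negbTE nle_xy).
case: eqP => [xy|_]; last by rewrite powR0 ?gt_eqF.
by rewrite xy text_le_refl in nle_xy.
Qed.

Lemma zeta_child x s y : ~~ inT x -> text_le (child x s) y ->
  zeta p t x y = p (letters x) s `^ t * zeta p t (child x s) y.
Proof.
move=> xT le_cy; have [x_unfin x_len] := not_inT xT.
move: (le_cy); rewrite child_leE // => /and3P [le_xy ne_xy /eqP nth_y].
have pi_child : pi_cond p y (child x s) =
    \prod_((size (syms x)).+1 <= i < size (syms y)) next_prob y i.
  by rewrite (pi_cond_le le_cy) syms_child // size_rcons.
rewrite /zeta (pi_cond_le le_xy) big_ltn ?text_lt_size // -pi_child.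
rewrite /next_prob nth_y syms_unfinished // size_map take_letters //.
by rewrite powRM ?p_ge0 ?pi_cond_ge0.
Qed.

Lemma zeta_unfold x y : ~~ inT x ->
  zeta p t x y =
  (x == y)%:R + \sum_s p (letters x) s `^ t * zeta p t (child x s) y.
Proof.
move=> xT.
have [/andP [le_xy ne_xy] | nlt_xy] := boolP (text_le x y && (x != y)).
  set s0 := nth None (syms y) (size (syms x)).
  have le_cy : text_le (child x s0) y by rewrite child_leE // le_xy ne_xy eqxx.
  rewrite (negbTE ne_xy) add0r (bigD1 s0) //= big1 ?addr0.
    exact: zeta_child.
  by move=> s ne_s; rewrite zeta_eq0 ?mulr0 // child_leE // le_xy ne_xy eq_sym.
rewrite big1 ?addr0 => [|s _]; last first.
  by rewrite zeta_eq0 ?mulr0 // child_leE // andbA negb_and nlt_xy.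
have [<-|ne_xy] := eqVneq x y; first exact: zeta_refl.
by rewrite zeta_eq0 //; rewrite ne_xy andbT in nlt_xy.
Qed.

Definition weight x : R := if inT x then 1 else 1 - \sum_s p (letters x) s `^ t.

Lemma zeta_weight x : \sum_y zeta p t x y * weight y = 1.
Proof.
have [m] := ubnP (N - size (syms x)); elim: m x => // m IH x lt_x.
have [xT|xT] := boolP (inT x).
  rewrite (bigD1 x) //= zeta_refl /weight xT mul1r big1 ?addr0 // => y ne_yx.
  by rewrite zeta_eq0 ?mul0r //; apply: contra ne_yx => /(inT_maximal xT) ->.
have child_weight s : \sum_y zeta p t (child x s) y * weight y = 1.
  apply: IH; have [x_unfin _] := not_inT xT.
  have := size_letters_lt x; move: lt_x.
  by rewrite syms_child // size_rcons syms_unfinished // size_map; lia.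
under eq_bigr => y _ do rewrite (zeta_unfold y xT) mulrDl mulr_suml.
rewrite big_split /= (bigD1 x) //= eqxx mul1r big1 ?addr0; last first.
  by move=> y ne_yx; rewrite eq_sym (negbTE ne_yx) mul0r.
under eq_bigr => y _ do under eq_bigr => s _ do rewrite -mulrA.
rewrite exchange_big /=.
under eq_bigr => s _ do rewrite -mulr_sumr child_weight mulr1.
by rewrite /weight (negbTE xT) subrK.
Qed.

Lemma zeta_mx_unit : zeta_mx N p t \in unitmx.
Proof.
pose rank (i : 'I_#|{: L A N}|) := size (syms (enum_val i)).
apply: (@unitmx_unitriangular _ _ _ rank) => [i|i j ne_ij].
  by rewrite mxE zeta_refl.
rewrite mxE.
have [le_ij _|/zeta_eq0 ->] := boolP (text_le (enum_val i) (enum_val j)).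
  by rewrite text_lt_size // (inj_eq enum_val_inj).
by rewrite eqxx.
Qed.

Lemma magnitude_weight : magnitude N p t = \sum_x weight x.
Proof.
rewrite /magnitude (@sum_invmx_weighting _ _ _ (\col_i weight (enum_val i))).
- by rewrite [RHS]big_enum_val; apply: eq_bigr => i _; rewrite mxE.
- exact: zeta_mx_unit.
apply/colP => i; rewrite !mxE -(zeta_weight (enum_val i)) [RHS]big_enum_val.
by apply: eq_bigr => j _; rewrite !mxE.
Qed.

End Model.

Theorem proposition3p9 (R : realType) (A : finType) (N : nat)
  (p : seq A -> option A -> R) :
  (1 <= N)%N -> is_pmf_family N p ->
  forall t : R, 0 < t ->
    magnitude N p t =
      (t - 1) * \sum_(x : L A N | ~~ inT x) tsallis t (p (letters x))
      + (#|[pred x : L A N | inT x]|)%:R.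
Proof.
move=> _ p_pmf t t_gt0; rewrite (magnitude_weight p_pmf t_gt0).
rewrite (bigID (@inT A N)) /= addrC; congr (_ + _).
  rewrite mulr_sumr; apply: eq_bigr => x xT; rewrite /weight (negbTE xT).
  by have [_ /p_pmf [p_ge0 p_sum1]] := not_inT xT; rewrite tsallis_pmf.
by rewrite (eq_bigr (fun=> 1)) => [|x xT]; rewrite ?sumr_const // /weight xT.
Qed.
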